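(* Let $x\in\mathbb{R}^n$, $a\in\mathbb{R}$, $b\in\mathbb{R}^n$, and let $C\in\mathbb{R}^{n\times n}$ be symmetric and nonsingular, and let $f(y)=a+b^\top(y-x)+\tfrac12 (y-x)^\top C(y-x)$. Let $y^1,\dots,y^p\in\mathbb{R}^n$, set $z^\ell=\nabla^2 f(x)(y^\ell-x)=C(y^\ell-x)$, $\ell=1,\dots,p$, and let $d^{prev}\in\mathbb{R}^n$. Consider the linear conditions on $d\in\mathbb{R}^n$: $$(z^\ell)^\top d=-f(y^\ell)+f(x)+\tfrac12 (y^\ell-x)^\top z^\ell,\qquad \ell=1,\dots,p,$$ and assume this system is feasible and underdetermined in $d$. Let $d^*$ be the optimal solution of $\min_d \tfrac12\|d-d^{prev}\|^2$ subject to these conditions. Then $$\|d^*-(-C^{-1}b)\|^2\le\|d^{prev}-(-C^{-1}b)\|^2.$$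
   Context: $\|\cdot\|$ is the Euclidean norm. *)

From HB Require Import structures.
From mathcomp Require Import all_boot all_order all_algebra.
Set Implicit Arguments. Unset Strict Implicit. Unset Printing Implicit Defensive.
Import Order.TTheory GRing.Theory Num.Theory.
Local Open Scope ring_scope.

Definition dotv (R : ringType) (n : nat) (u v : 'cV[R]_n) : R :=
  \sum_(i < n) u i 0 * v i 0.

Definition sqnorm (R : ringType) (n : nat) (v : 'cV[R]_n) : R := dotv v v.

Definition quadf (R : fieldType) (n : nat) (x : 'cV[R]_n) (a : R)
  (b : 'cV[R]_n) (C : 'M[R]_n) (y : 'cV[R]_n) : R :=
  a + dotv b (y - x) + 2^-1 * dotv (y - x) (C *m (y - x)).

Definition lin_cond (R : fieldType) (n p : nat) (x : 'cV[R]_n) (a : R)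
  (b : 'cV[R]_n) (C : 'M[R]_n) (Y : 'I_p -> 'cV[R]_n) (d : 'cV[R]_n) : Prop :=
  forall l : 'I_p,
    dotv (C *m (Y l - x)) d =
      - quadf x a b C (Y l) + quadf x a b C x
      + 2^-1 * dotv (Y l - x) (C *m (Y l - x)).

From HB Require Import structures.
From mathcomp Require Import all_boot all_order all_algebra.
From mathcomp Require Import ring lra.
Import Order.TTheory GRing.Theory Num.Theory.
Local Open Scope ring_scope.

(** The Newton point [-C^-1 b] satisfies every interpolation condition, and
    these conditions cut out an affine (in particular convex) set.  The
    minimizer [d*] is the Euclidean projection of [d_prev] onto that set, and
    a projection onto a convex set never increases the distance to a point
    of the set: the angle at [d*] between [d_prev] and any feasible point is
    obtuse, so Pythagoras gives the inequality. *)

Section InnerProduct.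
Context {R : comNzRingType} {n : nat}.
Implicit Types u v w : 'cV[R]_n.

Lemma dotvC u v : dotv u v = dotv v u.
Proof. by apply: eq_bigr => i _; rewrite mulrC. Qed.

Lemma dotvDr u v w : dotv u (v + w) = dotv u v + dotv u w.
Proof. by rewrite /dotv -big_split; apply: eq_bigr => i _; rewrite mxE mulrDr. Qed.

Lemma dotvZr u v k : dotv u (k *: v) = k * dotv u v.
Proof. by rewrite /dotv mulr_sumr; apply: eq_bigr => i _; rewrite mxE mulrCA. Qed.

Lemma dotvNr u v : dotv u (- v) = - dotv u v.
Proof. by rewrite -scaleN1r dotvZr mulN1r. Qed.

Lemma dotvBr u v w : dotv u (v - w) = dotv u v - dotv u w.
Proof. by rewrite dotvDr dotvNr. Qed.

Lemma dotvDl u v w : dotv (v + w) u = dotv v u + dotv w u.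
Proof. by rewrite !(dotvC _ u) dotvDr. Qed.

Lemma dotvZl u v k : dotv (k *: v) u = k * dotv v u.
Proof. by rewrite !(dotvC _ u) dotvZr. Qed.

Lemma dotv0r u : dotv u 0 = 0.
Proof. by rewrite /dotv big1 // => i _; rewrite mxE mulr0. Qed.

Lemma dotv_trmx u v : dotv u v = (u^T *m v) 0 0.
Proof. by rewrite mxE; apply: eq_bigr => i _; rewrite mxE. Qed.

Lemma dotv_mulmxl (A : 'M[R]_n) u v : dotv (A *m u) v = dotv u (A^T *m v).
Proof. by rewrite !dotv_trmx trmx_mul mulmxA. Qed.

Lemma sqnormN v : sqnorm (- v) = sqnorm v.
Proof. by rewrite /sqnorm dotvNr dotvC dotvNr opprK. Qed.

Lemma sqnormD u w : sqnorm (u + w) = sqnorm u + 2 * dotv u w + sqnorm w.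
Proof. rewrite /sqnorm dotvDr !dotvDl (dotvC w u); ring. Qed.

Lemma sqnormDZ u w t :
  sqnorm (u + t *: w) = sqnorm u + 2 * t * dotv u w + t ^+ 2 * sqnorm w.
Proof. rewrite sqnormD /sqnorm !dotvZr !dotvZl; ring. Qed.

End InnerProduct.

Section Projection.
Context {R : realFieldType} {n : nat}.
Implicit Types u v w : 'cV[R]_n.

Lemma sqnorm_ge0 v : 0 <= sqnorm v.
Proof. by rewrite sumr_ge0 // => i _; rewrite -expr2 sqr_ge0. Qed.

Lemma dotv_ge0_of_min_on_segment u w :
  (forall t, 0 < t <= 1 -> sqnorm u <= sqnorm (u + t *: w)) -> 0 <= dotv u w.
Proof.
move=> u_min; rewrite leNgt; apply/negP => c_lt0.
have q_ge0 := sqnorm_ge0 w.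
set c := dotv u w in c_lt0 u_min; set q := sqnorm w in q_ge0 u_min.
have den_gt0 : 0 < q - c by lra.
(* [t] is where the quadratic [2 t c + t^2 q] is negative yet [t <= 1]. *)
set t := - c / (q - c).
have t_den : t * (q - c) = - c by rewrite divfK // gt_eqF.
have t_gt0 : 0 < t by rewrite divr_gt0 // oppr_gt0.
have t_le1 : t <= 1 by rewrite ler_pdivrMr // mul1r; lra.
have := u_min t; rewrite t_gt0 t_le1 sqnormDZ -/c -/q -addrA lerDl => /(_ isT).
have -> : 2 * t * c + t ^+ 2 * q = t * c * (1 + t).
  have t_q : t * q = t * c - c by rewrite -t_den; ring.
  by rewrite expr2 -[t * t * q]mulrA t_q; ring.
have : t * c * (1 + t) < 0 by rewrite pmulr_llt0 ?pmulr_rlt0 //; lra.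
by rewrite ltNge => /negP.
Qed.

Definition convex_set (S : 'cV[R]_n -> Prop) :=
  forall d e t, S d -> S e -> 0 <= t <= 1 -> S (d + t *: (e - d)).

Lemma sqnorm_proj_convex_le (S : 'cV[R]_n -> Prop) dprev dstar e :
  convex_set S -> S dstar ->
  (forall d, S d -> sqnorm (dstar - dprev) <= sqnorm (d - dprev)) ->
  S e -> sqnorm (dstar - e) <= sqnorm (dprev - e).
Proof.
move=> S_convex S_dstar dstar_min S_e.
set u := dstar - dprev; set w := e - dstar.
have obtuse : 0 <= dotv u w.
  apply: dotv_ge0_of_min_on_segment => t /andP[t_gt0 t_le1].
  have -> : u + t *: w = dstar + t *: (e - dstar) - dprev by rewrite /u addrAC.
  by apply/dstar_min/S_convex => //; rewrite ltW ?t_gt0.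
have -> : dstar - e = - w by rewrite opprB.
have -> : dprev - e = - (u + w) by rewrite /u /w opprD !opprB addrA subrK.
clearbody u w; rewrite !sqnormN sqnormD; have := sqnorm_ge0 u; lra.
Qed.

End Projection.

Section InterpolationConditions.
Context {R : realFieldType} {n p : nat}.
Variables (x : 'cV[R]_n) (a : R) (b : 'cV[R]_n) (C : 'M[R]_n).
Variable Y : 'I_p -> 'cV[R]_n.

Lemma lin_cond_convex : convex_set (lin_cond x a b C Y).
Proof. by move=> d e t Hd He _ l; rewrite dotvDr dotvZr dotvBr Hd He; ring. Qed.

Lemma lin_cond_newton_point :
  C^T = C -> C \in unitmx -> lin_cond x a b C Y (- (invmx C *m b)).
Proof.
move=> C_sym C_unit l.
rewrite dotv_mulmxl C_sym mulmxN mulmxA mulmxV // mul1mx dotvNr.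
by rewrite /quadf subrr dotv0r mulmx0 dotv0r mulr0 !addr0 dotvC; ring.
Qed.

End InterpolationConditions.

Theorem theorem3 (R : realFieldType) (n p : nat) (x : 'cV[R]_n) (a : R)
  (b : 'cV[R]_n) (C : 'M[R]_n) (Y : 'I_p -> 'cV[R]_n) (dprev dstar : 'cV[R]_n) :
  C^T = C ->
  C \in unitmx ->
  (exists d, lin_cond x a b C Y d) ->
  (p < n)%N ->
  lin_cond x a b C Y dstar ->
  (forall d, lin_cond x a b C Y d ->
     2^-1 * sqnorm (dstar - dprev) <= 2^-1 * sqnorm (d - dprev)) ->
  sqnorm (dstar - (- (invmx C *m b))) <= sqnorm (dprev - (- (invmx C *m b))).
Proof.
(* Feasibility follows from [lin_cond_newton_point]. *)
move=> C_sym C_unit _ _ dstar_feas dstar_min.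
apply: (sqnorm_proj_convex_le _ _ _ _ (lin_cond_convex x a b C Y) dstar_feas).
- by move=> d /dstar_min; rewrite ler_pM2l // invr_gt0 ltr0n.
- exact: lin_cond_newton_point.
Qed.
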